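(* Let $G_1=(V,D_1)$ and $G_2=(V,D_2)$ be two different (i.e. $D_1\neq D_2$) simple directed graphs on the same node set $V$, neither of which is complete and both of which are transitive triangle-free. Then $G_1$ and $G_2$ have different Jacobian matroids.
   Context: A directed graph $G=(V,D)$ has a finite node set $V$ and edge set $D\subseteq V\times V$ of ordered pairs $(i,j)$, $i\neq j$. It is simple if $(i,j)$ and $(j,i)$ are never both in $D$. It is complete if every pair of distinct nodes is adjacent. $\mathrm{ch}(i)$ denotes the set of children of $i$. A transitive triangle (shielded collider) is a triple of nodes $i,j,k$ with $i\to k$, $j\to k$, and $i,j$ adjacent (either $i\to j$ or $j\to i$). A graph is transitive triangle-free if it has none. Equivalently, for all $j\in V$ and all $i\in\mathrm{ch}(j)$ we have $\mathrm{ch}(j)\cap\mathrm{ch}(i)=\emptyset$. For $G=(V,D)$ let $\Lambda$ be the $V\times V$ matrix with indeterminate entries $\lambda_{ij}$ for $(i,j)\in D$ and zeros elsewhere, and $s$ a further indeterminate. Let $\psi_G(\Lambda,s)=s(I-\Lambda)(I-\Lambda)^T=K$. The transposed Jacobian $J(\psi_G)$ has rows indexed by $\{\lambda_{kl}:(k,l)\in D\}\cup\{s\}$ and columns indexed by entries $K_{ij}$, $i\le j$. Its entry in row $\theta$, column $K_{ij}$ is $\partial K_{ij}/\partial\theta$. The Jacobian matroid of $G$ is the matroid on the columns in which a set is independent iff its columns are linearly independent over $\mathbb{R}(\lambda,s)$. *)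

From HB Require Import structures.
From mathcomp Require Import all_boot all_order all_algebra.
From mathcomp Require Import fraction mpoly.
From mathcomp Require Import reals.

Set Implicit Arguments.
Unset Strict Implicit.
Unset Printing Implicit Defensive.

Import Order.TTheory GRing.Theory Num.Theory.
Local Open Scope ring_scope.

Definition simple_digraph (n : nat) (D : {set 'I_n * 'I_n}) : Prop :=
  (forall i j, (i, j) \in D -> i != j) /\
  (forall i j, (i, j) \in D -> (j, i) \notin D).

Definition adjacent (n : nat) (D : {set 'I_n * 'I_n}) (i j : 'I_n) : bool :=
  ((i, j) \in D) || ((j, i) \in D).

Definition complete_digraph (n : nat) (D : {set 'I_n * 'I_n}) : Prop :=
  forall i j : 'I_n, i != j -> adjacent D i j.

Definition transitive_triangle_free (n : nat) (D : {set 'I_n * 'I_n}) : Prop :=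
  ~ (exists i j k : 'I_n,
        [/\ (i, k) \in D, (j, k) \in D & adjacent D i j]).

(* Polynomial ring in the indeterminates lambda_{ij} ((i,j) in V x V) and s.
   Variables are indexed by 'I_(N.+1) with N = #|V x V|; lambda_{ij} is the
   variable number enum_rank (i,j), and s is the last variable.  Only the
   lambda_{ij} with (i,j) in D are used by a given graph. *)
Definition nvars (n : nat) : nat := #|{: 'I_n * 'I_n}|.+1.

Definition lam_idx (n : nat) (i j : 'I_n) : 'I_(nvars n) :=
  widen_ord (leqnSn _) (enum_rank (i, j)).

Definition s_idx (n : nat) : 'I_(nvars n) := ord_max.

Section Jac.
Variable R : realType.
Variable n : nat.
Notation P := {mpoly R[nvars n]}.

Definition Lam (D : {set 'I_n * 'I_n}) : 'M[P]_n :=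
  \matrix_(i, j) (if (i, j) \in D then 'X_(lam_idx i j) else 0).

Definition Kmat (D : {set 'I_n * 'I_n}) : 'M[P]_n :=
  'X_(s_idx n) *: ((1%:M - Lam D) *m (1%:M - Lam D)^T).

(* rows of the transposed Jacobian: the parameters lambda_{kl}, (k,l) in D, and s *)
Definition param (D : {set 'I_n * 'I_n}) := option {e : 'I_n * 'I_n | e \in D}.

Definition param_var (D : {set 'I_n * 'I_n}) (t : param D) : 'I_(nvars n) :=
  match t with
  | Some e => lam_idx (val e).1 (val e).2
  | None => s_idx n
  end.

(* columns: entries K_{ij} with i <= j *)
Definition kcol := {p : 'I_n * 'I_n | (p.1 <= p.2)%N}.

Definition jac (D : {set 'I_n * 'I_n}) (t : param D) (c : kcol) : P :=
  mderiv (param_var t) (Kmat D (val c).1 (val c).2).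

Definition jac_indep (D : {set 'I_n * 'I_n}) (S : {set kcol}) : Prop :=
  forall a : kcol -> {fraction P},
    (forall t : param D, \sum_(c in S) a c * FracField.tofrac (jac t c) = 0) ->
    forall c, c \in S -> a c = 0.

End Jac.

Definition same_jacobian_matroid (R : realType) (n : nat)
  (D1 D2 : {set 'I_n * 'I_n}) : Prop :=
  forall S : {set kcol n}, jac_indep R D1 S <-> jac_indep R D2 S.

From mathcomp Require Import all_boot all_order all_algebra.
From mathcomp Require Import fraction mpoly.
From mathcomp Require Import reals.
From mathcomp Require Import ring boolp.

(* Let (k, x) be an edge of D1 but not of D2 and u a third node, which exists
   because D1 is not complete, and let T be the set of columns K_ij with
   i, j <> x.  On a transitive triangle-free graph the columns satisfy, at every
   node v, the relation
     K_vv + sum_(v -> w) 2 lam_vw K_vw = (1 - sum_(v -> w) lam_vw^2) e_s,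
   where e_s is the indicator of the s-row.  At a node m <> x that does not point
   to x it puts a nonzero multiple of e_s in the span of T; if there is no such
   node, D1 is the star into x and a similar relation among K_kk, K_uu, K_uk
   does it.  The relation at k then puts K_kx in the span of T.  In D2, either
   some row lam_xw is nonzero on K_kx and vanishes on T, so K_kx is not in the
   closure of T, or the column K_kx vanishes, i.e. it is a loop of the
   Jacobian matroid of D2 but not of D1. *)

Set Implicit Arguments.
Unset Strict Implicit.
Unset Printing Implicit Defensive.

Import GRing.Theory Num.Theory.
Local Open Scope ring_scope.
Local Notation "x %:F" := (FracField.tofrac x).

Section Span.
Variables (R : comPzRingType) (C : finType) (I : Type) (f : C -> I -> R).

Definition in_span (T : {set C}) (v : I -> R) : Prop :=
  exists b : C -> R, forall t, v t = \sum_(c in T) b c * f c t.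

Lemma in_span_ext (T : {set C}) (v w : I -> R) : v =1 w -> in_span T v -> in_span T w.
Proof. by move=> vw [b hb]; exists b => t; rewrite -vw hb. Qed.

Lemma in_span0 (T : {set C}) : in_span T (fun=> 0).
Proof. by exists (fun=> 0) => t; rewrite big1 // => c _; rewrite mul0r. Qed.

Lemma in_span_mem (T : {set C}) c : c \in T -> in_span T (f c).
Proof.
move=> cT; exists (fun d => (d == c)%:R) => t.
by rewrite (bigD1 c) //= eqxx mul1r big1 ?addr0 // => d /andP[_ /negbTE->]; rewrite mul0r.
Qed.

Lemma in_spanD (T : {set C}) (v w : I -> R) :
  in_span T v -> in_span T w -> in_span T (fun t => v t + w t).
Proof.
move=> [b1 h1] [b2 h2]; exists (fun c => b1 c + b2 c) => t.
by rewrite h1 h2 -big_split; apply: eq_bigr => c _; rewrite mulrDl.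
Qed.

Lemma in_spanZ (T : {set C}) (p : R) (v : I -> R) : in_span T v -> in_span T (fun t => p * v t).
Proof.
move=> [b h]; exists (fun c => p * b c) => t.
by rewrite h mulr_sumr; apply: eq_bigr => c _; rewrite mulrA.
Qed.

Lemma in_spanN (T : {set C}) (v : I -> R) : in_span T v -> in_span T (fun t => - v t).
Proof. by move/(in_spanZ (-1)); apply: in_span_ext => t; rewrite mulN1r. Qed.

Lemma in_span_sum (T : {set C}) (J : Type) (r : seq J) (Pr : pred J) (g : J -> I -> R) :
  (forall j, Pr j -> in_span T (g j)) ->
  in_span T (fun t => \sum_(j <- r | Pr j) g j t).
Proof.
move=> hg; elim: r => [|j r IH].
  by apply: in_span_ext (in_span0 T) => t; rewrite big_nil.
case: (boolP (Pr j)) => [Prj|nPrj].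
  by apply: in_span_ext (in_spanD (hg j Prj) IH) => t; rewrite big_cons Prj.
by apply: in_span_ext IH => t; rewrite big_cons (negbTE nPrj).
Qed.

Lemma in_span_trans (T B : {set C}) (v : I -> R) :
  in_span T v -> (forall c, c \in T -> in_span B (f c)) -> in_span B v.
Proof.
move=> [b hb] TB; apply: in_span_ext (fun t => esym (hb t)) _.
by apply: in_span_sum => c cT; apply: in_spanZ; apply: TB.
Qed.

End Span.

Lemma in_span_tofrac (R : idomainType) (C : finType) (I : Type) (f : C -> I -> R)
    (T : {set C}) (p : R) (v : I -> R) :
  p != 0 -> in_span f T (fun t => p * v t) ->
  in_span (fun c t => (f c t)%:F) T (fun t => (v t)%:F).
Proof.
move=> p_neq0 [b hb].
have pF_neq0 : p%:F != 0 by rewrite tofrac_eq0.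
exists (fun c => (b c)%:F / p%:F) => t; apply: (mulfI pF_neq0).
rewrite -tofracM hb rmorph_sum mulr_sumr; apply: eq_bigr => c _.
by rewrite rmorphM /= mulrA [p%:F * _]mulrC divfK.
Qed.

Section Independence.
Variables (F : fieldType) (C : finType) (I : Type) (f : C -> I -> F).

Definition indep (S : {set C}) : Prop :=
  forall a : C -> F, (forall t, \sum_(c in S) a c * f c t = 0) ->
    forall c, c \in S -> a c = 0.

Lemma indep_set1 c t : f c t != 0 -> indep [set c].
Proof.
move=> fct_neq0 a ha d; rewrite inE => /eqP->.
by have /eqP := ha t; rewrite big_set1 mulf_eq0 (negbTE fct_neq0) orbF => /eqP.
Qed.

Lemma not_indep_set1 c : (forall t, f c t = 0) -> ~ indep [set c].
Proof.
move=> fc0 hind; apply: (negP (oner_neq0 F)); apply/eqP.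
by apply: (hind (fun=> 1)) (set11 c) => t; rewrite big_set1 fc0 mulr0.
Qed.

Lemma indep_setU1 (B : {set C}) K t0 : indep B -> K \notin B ->
  f K t0 != 0 -> (forall c, c \in B -> f c t0 = 0) -> indep (K |: B).
Proof.
move=> indB KB fK_neq0 fB0 a ha.
have aK0 : a K = 0.
  have /eqP := ha t0; rewrite big_setU1 //= big1 ?addr0 => [|c cB]; last first.
    by rewrite fB0 ?mulr0.
  by rewrite mulf_eq0 (negbTE fK_neq0) orbF => /eqP.
have haB t : \sum_(c in B) a c * f c t = 0.
  by have := ha t; rewrite big_setU1 //= aK0 mul0r add0r.
by move=> c /setU1P[->|cB] //; apply: indB haB c cB.
Qed.

Lemma in_span_of_dep (B : {set C}) c :
  indep B -> ~ indep (c |: B) -> c \notin B -> in_span f B (f c).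
Proof.
move=> indB /existsNP[a /not_implyP[ha /existsNP[d /not_implyP[dcB ad0]]]] cB.
have ac_neq0 : a c != 0.
  apply/eqP => ac0; apply: ad0; have haB t : \sum_(e in B) a e * f e t = 0.
    by have := ha t; rewrite big_setU1 //= ac0 mul0r add0r.
  by case/setU1P: dcB => [->|dB] //; apply: indB haB d dB.
exists (fun e => - (a e / a c)) => t; apply: (mulfI ac_neq0).
have /eqP := ha t; rewrite big_setU1 //= addr_eq0 => /eqP->.
rewrite mulr_sumr -sumrN; apply: eq_bigr => e _.
by rewrite mulNr mulrN mulrA mulrCA mulfV // mulr1.
Qed.

Lemma not_indep_of_span (B : {set C}) K : K \notin B -> in_span f B (f K) -> ~ indep (K |: B).
Proof.
move=> KB [b hb] indKB.
pose a d := if d == K then -1 else b d.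
have /eqP : a K = 0.
  apply: indKB (setU11 _ _) => t; rewrite big_setU1 //= /a eqxx mulN1r hb addrC.
  apply/eqP; rewrite subr_eq0; apply/eqP/eq_bigr => d dB.
  by case: eqP dB KB => [->->|].
by rewrite /a eqxx oppr_eq0 oner_eq0.
Qed.

Definition basis_in (T B : {set C}) : Prop :=
  [/\ B \subset T, indep B & forall c, c \in T -> c \notin B -> ~ indep (c |: B)].

Lemma ex_basis_in (T : {set C}) : exists B, basis_in T B.
Proof.
have [|B /maxsetP[/andP[BT /asboolP indB] maxB]] :=
  ex_maxset (P := fun B => (B \subset T) && `[< indep B >]).
  by exists set0; rewrite sub0set; apply/asboolP => a _ c; rewrite inE.
exists B; split=> // c cT cB indcB.
have := maxB (c |: B); rewrite subUset sub1set cT BT subsetUr.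
by move=> /(_ (asboolT indcB) isT) /setP/(_ c); rewrite setU11 (negbTE cB).
Qed.

Lemma in_span_basis_in (T B : {set C}) c :
  basis_in T B -> c \in T -> in_span f B (f c).
Proof.
move=> [_ indB maxB] cT; have [cB|cB] := boolP (c \in B); first exact: in_span_mem.
exact: in_span_of_dep indB (maxB c cT cB) cB.
Qed.

End Independence.

(* [K] lies in the [f1]-closure of [T] but not in its [f2]-closure, while
   closures are determined by the independent sets. *)
Lemma same_indep_separating_row (F : fieldType) (C : finType) (I1 I2 : Type)
    (f1 : C -> I1 -> F) (f2 : C -> I2 -> F) (T : {set C}) (K : C) (t0 : I2) :
  (forall S, indep f1 S <-> indep f2 S) ->
  K \notin T -> in_span f1 T (f1 K) ->
  f2 K t0 != 0 -> (forall c, c \in T -> f2 c t0 = 0) -> False.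
Proof.
move=> same KT spanK fK_neq0 fT0.
have [B [BT indB maxB]] := ex_basis_in f2 T.
have KB : K \notin B by apply: contra KT; apply: (subsetP BT).
have /same indKB := indep_setU1 indB KB fK_neq0 (fun c cB => fT0 c (subsetP BT c cB)).
have basisB : basis_in f1 T B.
  by split=> // [|c cT cB /same]; [apply/same | apply: maxB].
apply: not_indep_of_span KB _ indKB; apply: in_span_trans spanK _ => c cT.
exact: in_span_basis_in basisB cT.
Qed.

Section Jacobian.
Variables (R : realType) (n : nat).
Local Notation P := {mpoly R[nvars n]}.
Local Notation graph := {set 'I_n * 'I_n}.
Local Notation fcols D := (fun (c : kcol n) (t : param D) => (jac R t c)%:F).

Definition lam (i j : 'I_n) : P := 'X_(lam_idx i j).
Definition svar : P := 'X_(s_idx n).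
Definition lamD (D : graph) (i j : 'I_n) : P := if (i, j) \in D then lam i j else 0.
Definition imL (D : graph) (i l : 'I_n) : P := (i == l)%:R - lamD D i l.
Definition gram (D : graph) (i j : 'I_n) : P := \sum_l imL D i l * imL D j l.

Lemma Kmat_gram (D : graph) i j : Kmat R D i j = svar * gram D i j.
Proof.
rewrite /Kmat !mxE /gram; congr (_ * _); apply: eq_bigr => l _.
by rewrite !mxE.
Qed.

Lemma lam_idx_eq (i j i' j' : 'I_n) :
  (lam_idx i j == lam_idx i' j') = ((i, j) == (i', j')).
Proof.
apply/eqP/eqP => [/(congr1 val) /= ij_eq|[-> ->] //].
by apply: enum_rank_inj; apply: val_inj.
Qed.

Lemma lam_idx_neq_s (i j : 'I_n) : (lam_idx i j == s_idx n) = false.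
Proof.
by apply/negbTE; rewrite -val_eqE /= neq_ltn ltn_ord.
Qed.

Lemma mderiv_var (v w : 'I_(nvars n)) : mderiv v ('X_w : P) = (w == v)%:R.
Proof.
rewrite mderivX mnm1E; have [->|] := eqVneq w v; last by rewrite scale0r.
have -> : (U_(v) - U_(v) = 0)%MM by apply/mnmP => j; rewrite mnmBE subnn mnm0E.
by rewrite mpolyX0 scale1r.
Qed.

Lemma mderiv_nat (v : 'I_(nvars n)) (k : nat) : mderiv v (k%:R : P) = 0.
Proof. by rewrite -mpolyC_nat mderivC. Qed.

Lemma mderiv_lam_imL (D : graph) a b i l : (a, b) \in D ->
  mderiv (lam_idx a b) (imL D i l) = - ((i == a) && (l == b))%:R.
Proof.
move=> ab; rewrite /imL /lamD mderivB mderiv_nat sub0r; congr (- _).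
case: ifP => [_|il]; first by rewrite mderiv_var lam_idx_eq.
by rewrite raddf0; case: eqP il => [-> | //]; case: eqP => [-> | //]; rewrite ab.
Qed.

Lemma mderiv_s_imL (D : graph) i l : mderiv (s_idx n) (imL D i l) = 0.
Proof.
rewrite /imL /lamD mderivB mderiv_nat sub0r.
by case: ifP => _; rewrite ?mderiv_var ?lam_idx_neq_s ?raddf0 ?mulr0n ?oppr0.
Qed.

Lemma sum_delta (g : 'I_n -> P) (c : bool) (b : 'I_n) :
  \sum_l (c && (l == b))%:R * g l = c%:R * g b.
Proof.
rewrite (bigD1 b) //= eqxx andbT big1 ?addr0 // => l /negbTE->.
by rewrite andbF mul0r.
Qed.

Lemma sum_delta1 (g : 'I_n -> P) (b : 'I_n) : \sum_l (b == l)%:R * g l = g b.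
Proof. by under eq_bigr do rewrite eq_sym -[_ == b]andTb; rewrite sum_delta mul1r. Qed.

Lemma mderiv_lam_gram (D : graph) a b i j : (a, b) \in D ->
  mderiv (lam_idx a b) (gram D i j) =
  - ((i == a)%:R * imL D j b + (j == a)%:R * imL D i b).
Proof.
move=> ab; rewrite /gram raddf_sum /=.
under eq_bigr => l _ do rewrite mderivM !mderiv_lam_imL // mulNr mulrN [imL D i l * _]mulrC.
by rewrite sumrB sumrN !sum_delta opprD.
Qed.

Lemma mderiv_s_gram (D : graph) i j : mderiv (s_idx n) (gram D i j) = 0.
Proof.
rewrite /gram raddf_sum big1 //= => l _.
by rewrite mderivM !mderiv_s_imL mul0r mulr0 addr0.
Qed.

Definition jcol (D : graph) (t : param D) (i j : 'I_n) : P :=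
  if t is Some e then
    - svar * ((i == (val e).1)%:R * imL D j (val e).2 + (j == (val e).1)%:R * imL D i (val e).2)
  else gram D i j.

Lemma jacE (D : graph) (t : param D) (c : kcol n) :
  jac R t c = jcol t (val c).1 (val c).2.
Proof.
rewrite /jac Kmat_gram mderivM /svar mderiv_var; case: t => [[[a b] ab]|] /=.
  by rewrite eq_sym lam_idx_neq_s mul0r add0r mderiv_lam_gram // mulrN mulNr.
by rewrite eqxx mul1r mderiv_s_gram mulr0 addr0.
Qed.

Lemma jcolC (D : graph) (t : param D) i j : jcol t i j = jcol t j i.
Proof.
case: t => [e|] /=; first by rewrite addrC.
by apply: eq_bigr => l _; rewrite mulrC.
Qed.

Definition kcol_of (i j : 'I_n) : kcol n :=
  match leqP i j with
  | LeqNotGtn ij => exist _ (i, j) ij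
  | GtnNotLeq ji => exist _ (j, i) (ltnW ji)
  end.

Lemma jac_kcol_of (D : graph) (t : param D) i j : jac R t (kcol_of i j) = jcol t i j.
Proof. by rewrite jacE /kcol_of; case: leqP => _ //=; rewrite jcolC. Qed.

Definition cols_avoiding (x : 'I_n) : {set kcol n} :=
  [set c : kcol n | ((val c).1 != x) && ((val c).2 != x)].

Lemma kcol_of_cols_avoiding x i j : (kcol_of i j \in cols_avoiding x) = (i != x) && (j != x).
Proof. by rewrite inE /kcol_of; case: leqP => //= _; rewrite andbC. Qed.

Definition srow (D : graph) (t : param D) : P := if t is None then 1 else 0.

Definition lam_param (D : graph) i j (ij : (i, j) \in D) : param D :=
  Some (exist _ (i, j) ij).

Definition sqsum (D : graph) v : P := \sum_(w | (v, w) \in D) lam v w ^+ 2.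

Lemma neq0_of_meval (p : P) (v : 'I_(nvars n) -> R) : p.@[v] != 0 -> p != 0.
Proof. by apply: contraNneq => ->; rewrite meval0. Qed.

Lemma lam_neq0 i j : lam i j != 0.
Proof. by apply: (@neq0_of_meval _ (fun=> 1)); rewrite mevalXU oner_neq0. Qed.

Lemma svar_neq0 : svar != 0.
Proof. by apply: (@neq0_of_meval _ (fun=> 1)); rewrite mevalXU oner_neq0. Qed.

Lemma two_neq0 : (2%:R : P) != 0.
Proof. by rewrite -mpolyC_nat mpolyC_eq0 pnatr_eq0. Qed.

Lemma one_sub_sqsum_neq0 (D : graph) v : 1 - sqsum D v != 0.
Proof.
apply: (@neq0_of_meval _ (fun=> 0)); rewrite mevalB meval1 /sqsum.
rewrite (big_morph _ (mevalD _) (meval0 _)) big1 ?subr0 ?oner_neq0 // => w _.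
by rewrite expr2 mevalM mevalXU mul0r.
Qed.

Lemma lam_sqr_add_neq0 k u x : u != k -> lam k x ^+ 2 + lam u x ^+ 2 != 0.
Proof.
move=> uk; apply: (@neq0_of_meval _ (fun i => (i == lam_idx k x)%:R)).
rewrite mevalD !expr2 !mevalM !mevalXU !lam_idx_eq !xpair_eqE (negbTE uk) !eqxx /=.
by rewrite mul0r addr0 mulr1 oner_neq0.
Qed.

Section Graph.
Variable D : graph.
Hypothesis Dsimple : simple_digraph D.
Local Notation jcols := (fun (c : kcol n) (t : param D) => jac R t c).

Lemma edge_neq i j : (i, j) \in D -> i != j.
Proof. by case: Dsimple => irr _; apply: irr. Qed.

Lemma edge_asym i j : (i, j) \in D -> (j, i) \notin D.
Proof. by case: Dsimple => _; apply. Qed.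

Lemma ttf_contra i j k : transitive_triangle_free D ->
  (i, k) \in D -> (j, k) \in D -> (i, j) \in D -> False.
Proof. by move=> ttf ik jk ij; apply: ttf; exists i, j, k; rewrite /adjacent ij. Qed.

Lemma lamD_in i j : (i, j) \in D -> lamD D i j = lam i j.
Proof. by rewrite /lamD => ->. Qed.

Lemma lamD_out i j : (i, j) \notin D -> lamD D i j = 0.
Proof. by rewrite /lamD => /negbTE->. Qed.

Lemma imL_diag i : imL D i i = 1.
Proof.
rewrite /imL eqxx lamD_out ?subr0 //.
by apply/negP => /edge_neq; rewrite eqxx.
Qed.

Lemma imL_off i l : i != l -> imL D i l = - lamD D i l.
Proof. by rewrite /imL => /negbTE->; rewrite sub0r. Qed.

Lemma imL_eq0 i l : i != l -> (i, l) \notin D -> imL D i l = 0.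
Proof. by move=> il ilD; rewrite imL_off // lamD_out ?oppr0. Qed.

Lemma gram_expand i j :
  gram D i j = (i == j)%:R - lamD D j i - lamD D i j + \sum_l lamD D i l * lamD D j l.
Proof.
rewrite /gram (eq_bigr (fun l => (i == l)%:R * (j == l)%:R - (i == l)%:R * lamD D j l
    - (j == l)%:R * lamD D i l + lamD D i l * lamD D j l)) => [|l _]; last first.
  by rewrite /imL; ring.
by rewrite big_split /= !sumrB !sum_delta1 eq_sym.
Qed.

Lemma gram_diag v : gram D v v = 1 + sqsum D v.
Proof.
rewrite gram_expand eqxx lamD_out ?subr0; last by apply/negP => /edge_neq; rewrite eqxx.
congr (_ + _); rewrite /sqsum [RHS]big_mkcond; apply: eq_bigr => l _.
by rewrite /lamD; case: ifP; rewrite ?mulr0.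
Qed.

Section Star.
Variable x : 'I_n.
Hypothesis Dstar : forall p q, (p, q) \in D -> q = x.

Lemma lamD_star v l : (v, x) \in D -> lamD D v l = (l == x)%:R * lam v x.
Proof.
move=> vx; rewrite /lamD; case: ifP => [/Dstar->|vl]; first by rewrite eqxx mul1r.
by case: eqP vl => [-> | _]; rewrite ?vx ?mul0r.
Qed.

Lemma sum_lamD_star v w : (v, x) \in D -> (w, x) \in D ->
  \sum_l lamD D v l * lamD D w l = lam v x * lam w x.
Proof.
move=> vx wx; under eq_bigr do rewrite (lamD_star _ vx) (lamD_star _ wx).
by rewrite (bigD1 x) //= eqxx big1 => [|l /negbTE->] /=; ring.
Qed.

Lemma jac_star_relation k u : (k, x) \in D -> (u, x) \in D -> u != k ->
  forall t : param D,
  - (2%:R * lam k x * lam u x) * jac R t (kcol_of u k)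
  + lam u x ^+ 2 * jac R t (kcol_of k k) + lam k x ^+ 2 * jac R t (kcol_of u u)
  = (lam k x ^+ 2 + lam u x ^+ 2) * srow t.
Proof.
move=> kx ux uk t; rewrite !jac_kcol_of.
have kx_neq := edge_neq kx; have ux_neq := edge_neq ux.
case: t => [[[c d] cd]|] /=.
  rewrite (Dstar cd) (imL_off kx_neq) (imL_off ux_neq) !lamD_in // mulr0; ring.
rewrite !gram_expand (negbTE uk) !eqxx !sum_lamD_star // !(lamD_star _ kx) !(lamD_star _ ux).
by rewrite (negbTE kx_neq) (negbTE ux_neq) /=; ring.
Qed.

Lemma srow_in_span_star k u : (k, x) \in D -> (u, x) \in D -> u != k ->
  in_span jcols (cols_avoiding x) (fun t => (lam k x ^+ 2 + lam u x ^+ 2) * srow t).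
Proof.
move=> kx ux uk; have kx_neq := edge_neq kx; have ux_neq := edge_neq ux.
apply: (in_span_ext (v := fun t => _ + _ + _) (jac_star_relation kx ux uk)).
by apply: in_spanD; [apply: in_spanD|]; apply: in_spanZ; apply: in_span_mem;
  rewrite kcol_of_cols_avoiding ?kx_neq ?ux_neq.
Qed.

End Star.

Section TransitiveTriangleFree.
Hypothesis Dttf : transitive_triangle_free D.

Lemma gram_edge v w : (v, w) \in D -> gram D v w = - lam v w.
Proof.
move=> vw; rewrite gram_expand (negbTE (edge_neq vw)) (lamD_out (edge_asym vw)).
rewrite (lamD_in vw) big1 ?addr0 ?subr0 ?sub0r // => l _; rewrite /lamD.
case: ifP => vl; last by rewrite mul0r.
by case: ifP => wl; [case: (ttf_contra Dttf vl wl vw) | rewrite mulr0].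
Qed.

Lemma gram_node_relation v :
  gram D v v + \sum_(w | (v, w) \in D) 2%:R * lam v w * gram D v w = 1 - sqsum D v.
Proof.
rewrite gram_diag (eq_bigr (fun w => - (2%:R * lam v w ^+ 2))) => [|w vw].
  by rewrite sumrN -mulr_sumr /sqsum; ring.
by rewrite gram_edge //; ring.
Qed.

Lemma jcol_node_relation v (e : {e : _ | e \in D}) :
  jcol (Some e) v v + \sum_(w | (v, w) \in D) 2%:R * lam v w * jcol (Some e) v w = 0.
Proof.
case: e => [[a b] ab] /=; have [->|va] := eqVneq v a.
  have ab_neq := edge_neq ab.
  rewrite (imL_off ab_neq) (lamD_in ab) (bigD1 b) //= imL_diag eq_sym (negbTE ab_neq).
  rewrite big1 => [|w /andP[aw wb]]; first by rewrite /=; ring.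
  rewrite eq_sym (negbTE (edge_neq aw)) (imL_off wb) lamD_out ?oppr0; first by rewrite /=; ring.
  by apply/negP => wbD; apply: ttf_contra Dttf ab wbD aw.
rewrite big1 => [|w vw]; first by rewrite /=; ring.
have [wa|wa] := eqVneq w a; last by rewrite /=; ring.
subst w; have vb : v != b by apply: contraTneq ab => vb; rewrite -vb edge_asym.
rewrite (imL_off vb) lamD_out ?oppr0; first by rewrite /=; ring.
by apply/negP => vbD; apply: ttf_contra Dttf vbD ab vw.
Qed.

Lemma jac_node_relation v (t : param D) :
  jac R t (kcol_of v v) + \sum_(w | (v, w) \in D) 2%:R * lam v w * jac R t (kcol_of v w)
  = (1 - sqsum D v) * srow t.
Proof.
rewrite jac_kcol_of; under eq_bigr do rewrite jac_kcol_of.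
by case: t => [e|] /=; rewrite ?jcol_node_relation ?mulr0 // gram_node_relation mulr1.
Qed.

Lemma srow_in_span_node m x : m != x -> (m, x) \notin D ->
  in_span jcols (cols_avoiding x) (fun t => (1 - sqsum D m) * srow t).
Proof.
move=> mx mxD; apply: (in_span_ext (v := fun t => _ + _) (jac_node_relation m)).
apply: in_spanD; first by apply: in_span_mem; rewrite kcol_of_cols_avoiding mx.
apply: in_span_sum => w mw; apply: in_spanZ; apply: in_span_mem.
by rewrite kcol_of_cols_avoiding mx; apply: contraNneq mxD => <-.
Qed.

Lemma srow_in_span_cols_avoiding k x u : (k, x) \in D -> u != k -> u != x ->
  exists2 c0 : P, c0 != 0 & in_span jcols (cols_avoiding x) (fun t => c0 * srow t).
Proof.
move=> kx uk ux.
have [m /andP[mx mxD]|all_to_x] := pickP (fun m => (m != x) && ((m, x) \notin D)).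
  by exists (1 - sqsum D m); [apply: one_sub_sqsum_neq0 | apply: srow_in_span_node].
have to_x m : m != x -> (m, x) \in D by move=> mx; move: (all_to_x m); rewrite mx => /negbFE.
(* Every node points to x, so by transitive triangle-freeness no other edge exists. *)
have Dstar p q : (p, q) \in D -> q = x.
  move=> pq; apply/eqP/negP => /negP qx; have [px|px] := eqVneq p x.
    by move: pq; rewrite px => /edge_asym; rewrite to_x.
  exact: ttf_contra Dttf (to_x p px) (to_x q qx) pq.
exists (lam k x ^+ 2 + lam u x ^+ 2); first exact: lam_sqr_add_neq0.
exact (srow_in_span_star Dstar kx (to_x u ux) uk).
Qed.

Lemma edge_in_span_cols_avoiding k x u : (k, x) \in D -> u != k -> u != x ->
  in_span (fcols D) (cols_avoiding x) (fun t => (jac R t (kcol_of k x))%:F).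
Proof.
move=> kx uk ux; have kx_neq := edge_neq kx.
have [c0 c0_neq0 srow_span] := srow_in_span_cols_avoiding kx uk ux.
apply: (in_span_tofrac (p := c0 * (2%:R * lam k x))).
  by rewrite !mulf_neq0 ?two_neq0 ?lam_neq0.
pose rest (t : param D) :=
  \sum_(w | ((k, w) \in D) && (w != x)) 2%:R * lam k w * jac R t (kcol_of k w).
apply: (in_span_ext (v := fun t =>
  (1 - sqsum D k) * (c0 * srow t) - c0 * jac R t (kcol_of k k) - c0 * rest t)).
  move=> t; have := jac_node_relation k t; rewrite (bigD1 x kx) /= => node.
  by rewrite mulrCA -node /rest; ring.
apply: in_spanD; [apply: in_spanD|]; [exact: in_spanZ | |]; apply: in_spanN; apply: in_spanZ.
  by apply: in_span_mem; rewrite kcol_of_cols_avoiding kx_neq.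
apply: in_span_sum => w /andP[_ wx]; apply: in_spanZ; apply: in_span_mem.
by rewrite kcol_of_cols_avoiding kx_neq.
Qed.

End TransitiveTriangleFree.

Lemma jac_tail_cols_avoiding x w (xw : (x, w) \in D) c :
  c \in cols_avoiding x -> jac R (lam_param xw) c = 0.
Proof. by rewrite inE jacE /= => /andP[/negbTE-> /negbTE->] /=; ring. Qed.

Lemma jac_tail_kcol_neq0 x w k (xw : (x, w) \in D) : k != x ->
  (w == k) || ((k, w) \in D) -> jac R (lam_param xw) (kcol_of k x) != 0.
Proof.
move=> kx wk; rewrite jac_kcol_of /= (negbTE kx) eqxx.
case/orP: wk => [/eqP->|kw].
  by rewrite imL_diag /= mul0r add0r mul1r mulr1 oppr_eq0 svar_neq0.
rewrite (imL_off (edge_neq kw)) (lamD_in kw) /= mul0r add0r mul1r mulrNN.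
by rewrite mulf_neq0 ?svar_neq0 ?lam_neq0.
Qed.

Lemma jac_edge_kcol_neq0 k x (kx : (k, x) \in D) : jac R (lam_param kx) (kcol_of k x) != 0.
Proof.
rewrite jac_kcol_of /= eqxx (eq_sym x k) (negbTE (edge_neq kx)) imL_diag /=.
by rewrite mul0r addr0 mul1r mulr1 oppr_eq0 svar_neq0.
Qed.

Lemma jac_kcol_eq0 k x : k != x -> (k, x) \notin D -> (x, k) \notin D ->
  (forall w, (k, w) \in D -> (x, w) \notin D) ->
  forall t : param D, jac R t (kcol_of k x) = 0.
Proof.
move=> kx kxD xkD nocommon [[[a b] ab]|]; rewrite jac_kcol_of /=; last first.
  rewrite gram_expand (negbTE kx) (lamD_out xkD) (lamD_out kxD) big1 ?subr0 ?addr0 //.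
  move=> l _; rewrite /lamD; case: ifP => kl; last by rewrite mul0r.
  by rewrite (negbTE (nocommon l kl)) mulr0.
have [ka|_] := eqVneq k a.
  subst a; have xb : x != b by apply: contraNneq kxD => ->.
  by rewrite (eq_sym x k) (negbTE kx) (imL_eq0 xb (nocommon _ ab)) /=; ring.
have [xa|_] := eqVneq x a; last by rewrite /=; ring.
subst a; have kb : k != b by apply: contraNneq xkD => ->.
have kbD : (k, b) \notin D by apply: contraTN ab => /nocommon.
by rewrite (imL_eq0 kb kbD) /=; ring.
Qed.

End Graph.

Lemma third_node (D : graph) k x : (k, x) \in D -> ~ complete_digraph D ->
  exists2 u, u != k & u != x.
Proof.
move=> kx ncD; have [u /andP[uk ux]|none] := pickP (fun u => (u != k) && (u != x)).
  by exists u.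
have k_or_x u : (u == k) || (u == x) by move: (none u); rewrite -negb_or => /negbFE.
case: ncD => i j; rewrite /adjacent.
by case/orP: (k_or_x i) => /eqP->; case/orP: (k_or_x j) => /eqP->; rewrite ?eqxx ?kx ?orbT.
Qed.

Lemma edge_separates_jacobian_matroids (D1 D2 : graph) k x :
  simple_digraph D1 -> simple_digraph D2 ->
  transitive_triangle_free D1 -> ~ complete_digraph D1 ->
  (k, x) \in D1 -> (k, x) \notin D2 -> ~ same_jacobian_matroid R D1 D2.
Proof.
move=> s1 s2 t1 nc1 kx1 kx2 same.
have [u uk ux] := third_node kx1 nc1; have kx_neq := edge_neq s1 kx1.
have [w /andP[xw wk]|none] := pickP (fun w => ((x, w) \in D2) && ((w == k) || ((k, w) \in D2))).
  apply: (same_indep_separating_row (f1 := fcols D1) (f2 := fcols D2) same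
    (T := cols_avoiding x) (K := kcol_of k x) (t0 := lam_param xw)).
  - by rewrite kcol_of_cols_avoiding eqxx andbF.
  - exact (edge_in_span_cols_avoiding s1 t1 kx1 uk ux).
  - by rewrite tofrac_eq0 jac_tail_kcol_neq0.
  - by move=> c cx; rewrite jac_tail_cols_avoiding ?tofrac0.
have xk2 : (x, k) \notin D2 by move: (none k); rewrite eqxx andbT => /negbT.
have nocommon v : (k, v) \in D2 -> (x, v) \notin D2.
  by move=> kv; move: (none v); rewrite kv orbT andbT => /negbT.
apply: (not_indep_set1 (f := fcols D2) (c := kcol_of k x)).
  by move=> t; rewrite jac_kcol_eq0 ?tofrac0.
by apply/same; apply: (indep_set1 (t := lam_param kx1)); rewrite tofrac_eq0 jac_edge_kcol_neq0.
Qed.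

End Jacobian.

Theorem theorem4p8 (R : realType) (n : nat) (D1 D2 : {set 'I_n * 'I_n}) :
  D1 != D2 ->
  simple_digraph D1 -> simple_digraph D2 ->
  ~ complete_digraph D1 -> ~ complete_digraph D2 ->
  transitive_triangle_free D1 -> transitive_triangle_free D2 ->
  ~ same_jacobian_matroid R D1 D2.
Proof.
move=> D12 s1 s2 nc1 nc2 t1 t2.
have /existsP[[k x] kx] : [exists e, (e \in D1) != (e \in D2)].
  apply: contraR D12 => /existsPn D1D2; apply/eqP/setP => e.
  by apply/eqP; apply: negbNE (D1D2 e).
have [kx1|kx1] := boolP ((k, x) \in D1).
  by apply: (edge_separates_jacobian_matroids s1 s2 t1 nc1 kx1); move: kx; rewrite kx1.
have kx2 : (k, x) \in D2 by move: kx; rewrite (negbTE kx1) => /negbNE.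
move=> same; apply: (edge_separates_jacobian_matroids s2 s1 t2 nc2 kx2 kx1) => S.
exact: iff_sym.
Qed.
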